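(* In the single-deceiver single-oblivious quadratic setting of the context, let $\mathcal{M}\subset[N]$ be a set of players with $r_{i,1}\neq0$ and $\operatorname{sgn}(r_{i,1})=\operatorname{sgn}(r_{1,1})$ for all $i\in\mathcal{M}$, and suppose $\varepsilon_1r_{1,1}q_1q_3<0$. Then the set $\Omega$ of attainable values is nonempty, and there is a nonempty subset $\Omega^*\subset\Omega$ such that for every $J^{\mathrm{ref}}\in\Omega^*$ there exists $\delta^*\in\Delta_1$ with $J_1(x_{\delta^*})=J^{\mathrm{ref}}$, $\varepsilon_1\frac{d}{d\delta}J_1(x_\delta)\big|_{\delta=\delta^*}<0$, and $$J_i(x_{\delta^*})<J_i(x^* )\qquad\forall i\in\mathcal{M}\cup\{1\}.$$
   Context: Quadratic game: $J_i(x)=\frac12x^\top Q_ix+b_i^\top x+p_i$, $Q_i\in\mathbb{R}^{N\times N}$ symmetric, $b_i\in\mathbb{R}^N$, $p_i\in\mathbb{R}$. $(Q)_{j:}$ = $j$-th row, $(Q)_{:j}$ = $j$-th column, $(b)_j$ = $j$-th entry; $[Q]^{d,1}$ is $Q$ with row $d$ and column $1$ removed, $[Q]^{d,\sim}$ is $Q$ with only row $d$ removed. $\mathcal{Q}$ is the matrix with $m$-th row $(Q_m)_{m:}$, $\mathcal{B}$ the vector with $m$-th entry $(b_m)_m$. Player 1 is the only deceiver and deceives only player $d\neq1$. $\bar{\mathcal{Q}}$ is the $N\times N$ matrix whose only nonzero row is row $d$, equal to $(Q_d)_{1:}$; $\bar{\mathcal{B}}$ the vector whose only nonzero entry is entry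 $d$, equal to $(b_d)_1$. For $\delta\in\mathbb{R}$, $\mathcal{Q}_\delta=\mathcal{Q}+\delta\bar{\mathcal{Q}}$, $\mathcal{B}_\delta=\mathcal{B}+\delta\bar{\mathcal{B}}$. Fix $k>0$; assume $-k\mathcal{Q}$ is Hurwitz and $[\mathcal{Q}]^{d,1}$ is invertible. $x^*=-\mathcal{Q}^{-1}\mathcal{B}$ (the Nash equilibrium); $\Delta_1=\{\delta\in\mathbb{R}:-k\mathcal{Q}_\delta\text{ Hurwitz}\}$; for $\delta\in\Delta_1$, $x_\delta=-\mathcal{Q}_\delta^{-1}\mathcal{B}_\delta$ (the deceptive Nash equilibrium). $\Phi=\begin{bmatrix}1\\-([\mathcal{Q}]^{d,1})^{-1}([\mathcal{Q}]^{d,\sim})_{:1}\end{bmatrix}\in\mathbb{R}^N$; $q_1=-\big((b_d)_1+(Q_d)_{1:}x^*\big)$, $q_2=(Q_d)_{1:}\Phi$, $q_3=(Q_d)_{d:}\Phi$; $r_{i,2}=\frac12\Phi^\top Q_i\Phi$, $r_{i,1}=(Q_ix^*+b_i)^\top\Phi$. Given a nonzero constant $\varepsilon_1$, a value $J^{\mathrm{ref}}\in\mathbb{R}$ is attainable if there exists $\delta^*\in\Delta_1$ with $J_1(x_{\delta^*})=J^{\mathrm{ref}}$ and $\varepsilon_1\frac{d}{d\delta}J_1(x_\delta)\big|_{\delta=\delta^*}<0$; $\Omega$ is the set of attainable values. *)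

From HB Require Import structures.
From mathcomp Require Import all_boot all_order all_algebra.
From mathcomp Require Import complex.
From mathcomp Require Import all_classical all_reals all_analysis.
Set Implicit Arguments. Unset Strict Implicit. Unset Printing Implicit Defensive.
Import Order.TTheory GRing.Theory Num.Theory.
Local Open Scope ring_scope.

Section Game.
Variable R : realType.
Variable n : nat.
(* N = n.+1 players, indexed by 'I_n.+1 ; paper's player 1 is ord0. *)
Local Notation N := n.+1.

Definition hurwitz (A : 'M[R]_N) : Prop :=
  forall lam : R[i], root (char_poly (map_mx (real_complex R) A)) lam ->
    complex.Re lam < 0.

Definition cost (Q : 'M[R]_N) (b : 'cV[R]_N) (p : R) (x : 'cV[R]_N) : R :=
  2^-1 * (x^T *m Q *m x) 0 0 + (b^T *m x) 0 0 + p.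

Variables (Q : 'I_N -> 'M[R]_N) (b : 'I_N -> 'cV[R]_N) (p : 'I_N -> R).
Variable d : 'I_N.
Variable k : R.

Definition calQ : 'M[R]_N := \matrix_(m, j) Q m m j.
Definition calB : 'cV[R]_N := \col_m b m m 0.
Definition barQ : 'M[R]_N := \matrix_(m, j) (if m == d then Q d ord0 j else 0).
Definition barB : 'cV[R]_N := \col_m (if m == d then b d ord0 0 else 0).

Definition calQd (delta : R) : 'M[R]_N := calQ + delta *: barQ.
Definition calBd (delta : R) : 'cV[R]_N := calB + delta *: barB.

Definition xstar : 'cV[R]_N := - (invmx calQ *m calB).
Definition xdelta (delta : R) : 'cV[R]_N := - (invmx (calQd delta) *m calBd delta).

Definition Delta1 (delta : R) : Prop := hurwitz (- (k *: calQd delta)).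

Definition Qd1 : 'M[R]_n := col' ord0 (row' d calQ).
Definition Qdsim : 'M[R]_(n, N) := row' d calQ.

Definition Phi : 'cV[R]_N :=
  col_mx (1 : 'cV[R]_1) (- (invmx Qd1 *m col ord0 Qdsim)).

Definition q1 : R := - (b d ord0 0 + (row ord0 (Q d) *m xstar) 0 0).
Definition q2 : R := (row ord0 (Q d) *m Phi) 0 0.
Definition q3 : R := (row d (Q d) *m Phi) 0 0.
Definition r2 (i : 'I_N) : R := 2^-1 * (Phi^T *m Q i *m Phi) 0 0.
Definition r1 (i : 'I_N) : R := ((Q i *m xstar + b i)^T *m Phi) 0 0.

Definition J1delta (delta : R) : R := cost (Q ord0) (b ord0) (p ord0) (xdelta delta).

Definition attainable (eps1 Jref : R) : Prop :=
  exists deltas : R, Delta1 deltas /\ J1delta deltas = Jref /\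
    eps1 * derive1 J1delta deltas < 0.

End Game.

(* Perturbing the row of player [d] by [de] moves the Nash equilibrium along the line
   [xstar + t Phi], with [t = de q1 / (q3 + de q2)], and along that line each cost is the
   quadratic [J_i(xstar) + t r_{i,1} + t^2 r_{i,2}].  For small [de] whose sign is opposite
   to that of [r_{1,1} q1 q3], [t] is small and [t r_{i,1} < 0] for all [i] in
   [M ∪ {1}], so all these costs decrease, while the derivative of [J_1(x_de)] keeps the
   sign of [r_{1,1} q1 q3], which [hsign] makes opposite to that of [eps1].  Such [de] lie
   in [Delta1] because being Hurwitz is an open condition under perturbations of one row;
   [Omega*] is then the singleton [{J_1(x_de)}]. *)

From HB Require Import structures.
From mathcomp Require Import all_boot all_order all_algebra.
From mathcomp Require Import complex.
From mathcomp Require Import all_classical all_reals all_analysis.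
From mathcomp Require Import perm ring lra.
Import Order.TTheory GRing.Theory Num.Theory Normc.
Local Open Scope classical_set_scope.
Local Open Scope ring_scope.

(** * Openness of the Hurwitz property *)

Lemma horner_char_poly (F : fieldType) m (A : 'M[F]_m) (a : F) :
  (char_poly A).[a] = \det (a%:M - A).
Proof.
rewrite /char_poly -horner_evalE -det_map_mx; congr (\det _).
apply/matrixP => i j; rewrite !mxE /= horner_evalE.
by rewrite hornerE /= !hornerE hornerMn hornerX.
Qed.

Lemma det_add_row_supported {F : comPzRingType} {m} (X : 'M[F]_m) {Y : 'M[F]_m} {d} :
  (forall i j, i != d -> Y i j = 0) ->
  \det (X + Y) = \det X + \sum_j Y d j * cofactor X d j.
Proof.
move=> Yd; rewrite (expand_det_row _ d) (expand_det_row X d) -big_split /=.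
apply: eq_bigr => j _; rewrite mxE mulrDl.
suff -> : cofactor (X + Y) d j = cofactor X d j by [].
rewrite /cofactor; congr (_ * \det _); apply/matrixP => i l.
by rewrite !mxE Yd ?addr0 // eq_sym neq_lift.
Qed.

Lemma normr_le_sum_norm {F : numDomainType} {m p} (A : 'M[F]_(m, p)) i j :
  `|A i j| <= \sum_a \sum_b `|A a b|.
Proof.
have sum_ge (I : finType) (G : I -> F) c : (forall b, 0 <= G b) -> G c <= \sum_b G b.
  by move=> G0; rewrite (bigD1 c) //= lerDl sumr_ge0.
apply: (@le_trans _ _ (\sum_b `|A i b|)); first exact: sum_ge.
by apply: (sum_ge _ (fun a => \sum_b `|A a b|)) => a; apply: sumr_ge0.
Qed.

Section ComplexModulus.
Context {R : rcfType}.
Implicit Types x y z l : R[i].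

Lemma normc_ge0 z : 0 <= normc z.
Proof. by case: z => a b; apply: sqrtr_ge0. Qed.

Lemma normc_real (a : R) : normc (a%:C)%C = `|a|.
Proof. by rewrite /normc /= expr0n /= addr0 sqrtr_sqr. Qed.

Lemma normc_ge_Re z : `|complex.Re z| <= normc z.
Proof.
case: z => a b; rewrite /normc /= -sqrtr_sqr.
by rewrite ler_wsqrtr // lerDl sqr_ge0.
Qed.

Lemma normcB x y : normc x - normc y <= normc (x - y).
Proof. by have := le_normcD (x - y) y; rewrite subrK; lra. Qed.

Lemma normc_sum (I : Type) (r : seq I) (P : pred I) (F : I -> R[i]) :
  normc (\sum_(i <- r | P i) F i) <= \sum_(i <- r | P i) normc (F i).
Proof.
elim/big_ind2: _ => [|x1 x2 y1 y2 h1 h2|//]; first by rewrite normc0.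
exact: le_trans (le_normcD _ _) (lerD h1 h2).
Qed.

Lemma normc_prod (I : Type) (r : seq I) (P : pred I) (F : I -> R[i]) :
  normc (\prod_(i <- r | P i) F i) = \prod_(i <- r | P i) normc (F i).
Proof. exact: (big_morph _ (@normcM R) (normc1 R)). Qed.

Lemma normc_sign m : normc ((-1) ^+ m) = 1 :> R.
Proof. by elim: m => [|m IH]; rewrite ?normc1 // exprS normcM normcN normc1 IH mulr1. Qed.

Lemma normc_det_le m (A : 'M[R[i]]_m) (B : R) :
  (forall i j, normc (A i j) <= B) -> normc (\det A) <= m`!%:R * B ^+ m.
Proof.
move=> hA; rewrite /determinant; apply: le_trans; first exact: normc_sum.
rewrite -card_Sn mulr_natl -sumr_const; apply: ler_sum => s _.
rewrite normcM normc_sign mul1r normc_prod -[in B ^+ m](card_ord m) -prodr_const.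
by apply: ler_prod => i _; rewrite normc_ge0 hA.
Qed.

Lemma normc_det_add_row_le {m} {X Y : 'M[R[i]]_m.+1} {d : 'I_m.+1} {B : R} :
  (forall i j, i != d -> Y i j = 0) -> (forall i j, normc (X i j) <= B) ->
  normc (\det (X + Y) - \det X) <= (\sum_j normc (Y d j)) * (m`!%:R * B ^+ m).
Proof.
move=> Yd XB; rewrite (det_add_row_supported X Yd) addrC addKr mulr_suml.
apply: le_trans; first exact: normc_sum.
apply: ler_sum => j _; rewrite normcM ler_wpM2l ?normc_ge0 //.
rewrite normcM normc_sign mul1r; apply: normc_det_le => a c.
by rewrite !mxE.
Qed.

Lemma normc_char_mx_le {m} (A : 'M[R]_m) l i j :
  normc ((l%:M - map_mx (real_complex R) A) i j) <=
  (1 + \sum_a \sum_b `|A a b|) * (1 + normc l).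
Proof.
rewrite !mxE; apply: le_trans (le_normcD _ _) _; rewrite normcN normc_real.
have : normc (l *+ (i == j)) <= normc l by case: (i == j); rewrite ?normc0 ?normc_ge0.
have := normr_le_sum_norm A i j; have := normr_ge0 (A i j); have := normc_ge0 l.
set SA := \sum_a _; nra.
Qed.

Lemma normc_sub_ge_Re_neg z l : complex.Re z < 0 -> 0 <= complex.Re l ->
  (- complex.Re z) / (1 - complex.Re z + normc z) * (1 + normc l) <= normc (l - z).
Proof.
move=> hz hl.
have hRe : - complex.Re z <= normc (l - z).
  apply: le_trans (normc_ge_Re _); rewrite raddfB /= ler_normr; apply/orP; left; lra.
have hB := normcB l z; have := normc_ge0 z; have := normc_ge0 l.
move=> hl0 hz0; rewrite mulrAC ler_pdivrMr; last lra.
nra.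
Qed.

Lemma monic_stable_poly_lower_bound (P : {poly R[i]}) :
  P \is monic -> (forall z, root P z -> complex.Re z < 0) ->
  exists2 C, 0 < C & forall l, 0 <= complex.Re l ->
    C * (1 + normc l) ^+ (size P).-1 <= normc P.[l].
Proof.
move=> Pmonic Pstable.
have [r Pr] := closed_field_poly_normal P.
rewrite (monicP Pmonic) scale1r in Pr.
have neg_r z : z \in r -> complex.Re z < 0.
  by move=> zr; apply: Pstable; rewrite Pr root_prod_XsubC.
pose c z := (- complex.Re z) / (1 - complex.Re z + normc z).
have c_gt0 z : z \in r -> 0 < c z.
  by move=> /neg_r hz; have := normc_ge0 z; rewrite /c => ?; rewrite divr_gt0 //; lra.
exists (\prod_(z <- r) c z); first by rewrite big_seq prodr_gt0.
move=> l hl; rewrite Pr horner_prod normc_prod size_prod_XsubC /=.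
have prod_const (x : R) : \prod_(z <- r) x = x ^+ size r.
  by elim: (r) => [|a s IH]; rewrite ?big_nil ?big_cons ?IH ?exprS.
rewrite -prod_const -big_split /= !big_seq; apply: ler_prod => z zr.
have := normc_ge0 l; have := c_gt0 z zr.
rewrite hornerXsubC normc_sub_ge_Re_neg ?neg_r // andbT; nra.
Qed.

End ComplexModulus.

Section Hurwitz.
Context {R : realType}.

Lemma hurwitz_unitmx m (A : 'M[R]_m.+1) : hurwitz A -> A \in unitmx.
Proof.
move=> hA; rewrite unitmxE unitfE; apply/negP => /eqP detA0.
have := hA 0; rewrite rootE horner_char_poly.
rewrite raddf0 sub0r -scaleN1r detZ det_map_mx detA0 rmorph0 mulr0 eqxx ltxx.
by move=> /(_ isT).
Qed.

(* The characteristic polynomial of [A] is bounded below by [C (1 + |l|)^(m+1)] on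
   the closed right half plane, while a perturbation [e E] of one row changes it by
   at most [|e| K (1 + |l|)^m]; so for [|e| < C / K] no root can reach that half plane. *)
Lemma hurwitz_row_perturbation {m} {A E : 'M[R]_m.+1} {d : 'I_m.+1} :
  (forall i j, i != d -> E i j = 0) -> hurwitz A ->
  \forall e \near (0 : R^o), hurwitz (A + e *: E).
Proof.
move=> Ed hA.
set AC := map_mx (real_complex R) A.
have [C C_gt0 lowerC] := @monic_stable_poly_lower_bound _ (char_poly AC)
  (char_poly_monic AC) hA.
rewrite size_char_poly /= in lowerC.
set SA := \sum_a \sum_b `|A a b|.
have SA_ge0 : 0 <= SA by apply: sumr_ge0 => a _; apply: sumr_ge0.
pose K := (\sum_j `|E d j|) * (m`!%:R * (1 + SA) ^+ m).
have K_ge0 : 0 <= K by rewrite !mulr_ge0 ?exprn_ge0 ?sumr_ge0 //; lra.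
have radius_gt0 : 0 < C / (K + 1) by rewrite divr_gt0 //; lra.
apply: filterS (nbhs0_lt radius_gt0) => e /=; rewrite ltr_pdivlMr; last lra.
move=> small_e l root_l; rewrite ltNge; apply/negP => Re_l.
set L := normc l; have L_ge0 : 0 <= L by apply: normc_ge0.
set X := l%:M - AC.
set Y := map_mx (real_complex R) (- (e *: E)).
have detXY : \det (X + Y) = 0.
  move: root_l; rewrite /root horner_char_poly => /eqP <-.
  by rewrite /X /Y map_mxN map_mxD opprD addrA.
have X_le i j : normc (X i j) <= (1 + SA) * (1 + L) := normc_char_mx_le A l i j.
have Y_row i j : i != d -> Y i j = 0.
  by move=> /Ed Eij; rewrite !mxE Eij mulr0 oppr0.
have := normc_det_add_row_le Y_row X_le.
rewrite detXY sub0r normcN exprMn.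
have -> : \sum_j normc (Y d j) = `|e| * \sum_j `|E d j|.
  rewrite mulr_sumr; apply: eq_bigr => j _.
  by rewrite !mxE normc_real normrN normrM.
have := lowerC l Re_l; rewrite horner_char_poly -/X exprS => lower upper.
have Lm_gt0 : 0 < (1 + L) ^+ m by rewrite exprn_gt0 //; lra.
have CL_le : C * (1 + L) <= `|e| * K.
  rewrite -(ler_pM2r Lm_gt0); have := le_trans lower upper.
  by rewrite /K !mulrA [_ * (1 + SA) ^+ m * _]mulrAC.
have := normr_ge0 e; nra.
Qed.

End Hurwitz.

Section RealSigns.
Context {R : realDomainType}.
Implicit Types a c t x : R.

Lemma mul_addr_small_gt0 a x : `|x| < `|a| -> 0 < a * (a + x).
Proof.
move=> xa; have ax : - (`|a| * `|x|) <= a * x.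
  by rewrite -normrM lerNl -normrN ler_norm.
have := real_normK (num_real a); have := normr_ge0 x.
rewrite mulrDr expr2; nra.
Qed.

Lemma quadratic_lt0 a c t : t * a < 0 -> `|c * t| < `|a| -> t * a + t ^+ 2 * c < 0.
Proof.
move=> ta ct; have a_neq0 : a != 0 by apply: contraTneq ta => ->; rewrite mulr0 ltxx.
have a2_gt0 : 0 < a ^+ 2 by rewrite exprn_even_gt0.
rewrite -(pmulr_llt0 _ a2_gt0).
have -> : (t * a + t ^+ 2 * c) * a ^+ 2 = (t * a) * (a * (a + c * t)) by ring.
by rewrite pmulr_llt0 // mul_addr_small_gt0.
Qed.

Lemma sgr_eq_mulr_lt0 a c t : Num.sg a = Num.sg c -> (t * a < 0) = (t * c < 0).
Proof. by move=> ac; rewrite -!(sgr_cp0 _).1.2 !sgrM ac. Qed.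

End RealSigns.

Lemma near0_exists_sign {R : realType} {P : R -> Prop} {c : R} :
  c != 0 -> (\forall x \near (0 : R^o), P x) -> exists x, P x /\ x * c < 0.
Proof.
move=> c_neq0 /nbhs_norm0P [e /= e_gt0 Pe].
exists (- (e / 2) * Num.sg c); split.
  by apply: Pe; rewrite /= normrM normrN normr_sg c_neq0 mulr1 gtr0_norm; lra.
rewrite -mulrA -normrEsg mulNr oppr_lt0 mulr_gt0 ?normr_gt0 //; lra.
Qed.

(** * Deceptive equilibria *)

Section Mobius.
Context {R : realType}.
Implicit Types a b c x y : R.

Definition mobius a b c x := x * a / (c + x * b).

Lemma mobius0 a b c : mobius a b c 0 = 0.
Proof. by rewrite /mobius !mul0r. Qed.

Lemma is_derive_affine b c x : is_derive x (1 : R) (fun y : R => c + y * b) b.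
Proof. by apply: is_derive_eq; rewrite /GRing.scale /=; ring. Qed.

Lemma is_derive_mobius a {b c x} : c + x * b != 0 ->
  is_derive x (1 : R) (mobius a b c) (a * c / (c + x * b) ^+ 2).
Proof.
move=> den_neq0.
have inv' := @is_deriveV R _ x b 1 den_neq0 (is_derive_affine b c x).
have num' : is_derive x (1 : R) (fun y : R => y * a) a.
  by apply: is_derive_eq; rewrite /GRing.scale /=; ring.
by apply: is_derive_eq; rewrite /GRing.scale /=; field; rewrite den_neq0.
Qed.

Lemma mobius_cvg0 a b {c} : c != 0 -> mobius a b c x @[x --> (0 : R^o)] --> 0.
Proof.
move=> c_neq0; rewrite -[X in _ --> X](mobius0 a b c).
apply/differentiable_continuous/derivable1_diffP.
have : c + 0 * b != 0 by rewrite mul0r addr0.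
by move=> /(is_derive_mobius a) [].
Qed.

Lemma mobius_den_nbhs {b c x} : c + x * b != 0 -> \forall y \near (x : R^o), c + y * b != 0.
Proof.
move=> den_neq0; have [/derivable1_diffP /differentiable_continuous den_cvg _] :=
  is_derive_affine b c x.
exact: cvgr_neq0 den_cvg den_neq0.
Qed.

Lemma mobius_mulr_lt0 a b c x y :
  0 < c * (c + x * b) -> x * (y * a * c) < 0 -> mobius a b c x * y < 0.
Proof.
move=> den_pos sign_x; rewrite -(pmulr_llt0 _ den_pos).
have den_neq0 : c + x * b != 0 by apply: contraTneq den_pos => ->; rewrite mulr0 ltxx.
suff -> : mobius a b c x * y * (c * (c + x * b)) = x * (y * a * c) by [].
by rewrite /mobius; field.
Qed.

End Mobius.

Lemma cost_line (R : realType) n (A : 'M[R]_n.+1) (v : 'cV[R]_n.+1) (s t : R) x w :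
  A^T = A -> cost A v s (x + t *: w) =
  cost A v s x + t * ((A *m x + v)^T *m w) 0 0 + t ^+ 2 * (2^-1 * (w^T *m A *m w) 0 0).
Proof.
move=> A_sym.
have cross : (w^T *m A *m x) 0 0 = (x^T *m A *m w) 0 0.
  transitivity ((w^T *m A *m x)^T 0 0); first by rewrite [RHS]mxE.
  by rewrite !trmx_mul trmxK A_sym mulmxA.
rewrite /cost.
have -> : (x + t *: w)^T = x^T + t *: w^T by rewrite linearD linearZ.
have -> : (A *m x + v)^T = x^T *m A + v^T by rewrite linearD /= trmx_mul A_sym.
rewrite !mulmxDl !mulmxDr -!scalemxAl -!scalemxAr.
rewrite ![((_ + _ : 'M[R]_1) _ _)]mxE ![((_ *: _ : 'M[R]_1) _ _)]mxE cross.
by field.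
Qed.

Section DeceptiveEquilibrium.
Variables (R : realType) (n : nat).
Variables (Q : 'I_n.+1 -> 'M[R]_n.+1) (b : 'I_n.+1 -> 'cV[R]_n.+1) (d : 'I_n.+1).
Hypothesis Qd1_unit : Qd1 Q d \in unitmx.

Local Notation tau := (mobius (q1 Q b d) (q2 Q d) (q3 Q d)).

Lemma barQ_mul (v : 'cV[R]_n.+1) :
  barQ Q d *m v = (row ord0 (Q d) *m v) 0 0 *: delta_mx d 0.
Proof.
apply/matrixP => i j; rewrite ord1 !mxE eqxx andbT; have [->|ne] := eqVneq i d.
  by rewrite mulr1; apply: eq_bigr => l _; rewrite !mxE eqxx.
by rewrite mulr0 big1 // => l _; rewrite mxE (negbTE ne) mul0r.
Qed.

Lemma barB_delta : barB b d = b d ord0 0 *: delta_mx d 0.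
Proof.
by apply/matrixP => i j; rewrite ord1 !mxE eqxx andbT; case: eqP; rewrite ?mulr1 ?mulr0.
Qed.

Lemma Qdsim_Phi : Qdsim Q d *m Phi Q d = 0.
Proof.
have split_mul (A : 'M[R]_(n, 1 + n)) (w : 'cV[R]_n) :
    A *m col_mx 1 w = lsubmx A + rsubmx A *m w.
  by rewrite -{1}(hsubmxK A) mul_row_col mulmx1.
have -> : Qdsim Q d *m Phi Q d = lsubmx (Qdsim Q d : 'M[R]_(n, 1 + n))
    + rsubmx (Qdsim Q d : 'M[R]_(n, 1 + n)) *m - (invmx (Qd1 Q d) *m col ord0 (Qdsim Q d)).
  exact: split_mul.
have -> : lsubmx (Qdsim Q d : 'M[R]_(n, 1 + n)) = col ord0 (Qdsim Q d).
  by apply/matrixP => i j; rewrite !mxE ord1; congr (_ _ _); exact: val_inj.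
have -> : rsubmx (Qdsim Q d : 'M[R]_(n, 1 + n)) = Qd1 Q d.
  by apply/matrixP => i j; rewrite !mxE; congr (_ _ _); exact: val_inj.
by rewrite mulmxN mulKVmx // subrr.
Qed.

Lemma calQ_Phi : calQ Q *m Phi Q d = q3 Q d *: delta_mx d 0.
Proof.
apply/matrixP => i j; rewrite ord1 [RHS]mxE [delta_mx _ _ _ _]mxE eqxx andbT.
case: (unliftP d i) => [i' ->|->].
  rewrite eq_sym (negbTE (neq_lift d i')) mulr0.
  transitivity ((Qdsim Q d *m Phi Q d) i' 0); last by rewrite Qdsim_Phi mxE.
  by rewrite !mxE; apply: eq_bigr => l _; rewrite !mxE.
by rewrite eqxx mulr1 /q3 !mxE; apply: eq_bigr => l _; rewrite !mxE.
Qed.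

(* [Phi] spans the kernel of the rows of [calQ] other than [d], which [barQ] leaves
   untouched; row [d] of the perturbed system then fixes the coefficient of [Phi]. *)
Lemma xdelta_line de : calQ Q \in unitmx -> calQd Q d de \in unitmx ->
  q3 Q d + de * q2 Q d != 0 -> xdelta Q b d de = xstar Q b + tau de *: Phi Q d.
Proof.
move=> calQ_unit calQd_unit den_neq0.
set x := xstar Q b + tau de *: Phi Q d.
have xstar_eq : calQ Q *m xstar Q b = - calB b by rewrite /xstar mulmxN mulKVmx.
suff x_eq : calQd Q d de *m x = - calBd b d de.
  by rewrite /xdelta -mulmxN -x_eq mulKmx.
rewrite /calQd mulmxDl -scalemxAl mulmxDr -scalemxAr xstar_eq calQ_Phi barQ_mul.
rewrite /calBd barB_delta opprD -scaleNr !scalerA -addrA -scalerDl.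
congr (_ + _ *: _); rewrite /x mulmxDr -scalemxAr.
rewrite [((_ + _ : 'M[R]_1) _ _)]mxE [((_ *: _ : 'M[R]_1) _ _)]mxE -/(q2 Q d).
by rewrite /q1 /mobius; field.
Qed.

Variable k : R.
Hypothesis k_neq0 : k != 0.
Hypothesis calQ_hurwitz : hurwitz (- (k *: calQ Q)).

Lemma Delta1_unitmx {de} : Delta1 Q d k de -> calQd Q d de \in unitmx.
Proof. by move=> /hurwitz_unitmx; rewrite -scaleNr unitmxZ // unitfE oppr_eq0. Qed.

Lemma calQd0 : calQd Q d 0 = calQ Q.
Proof. by rewrite /calQd scale0r addr0. Qed.

Lemma Delta1_nbhs {de} : Delta1 Q d k de -> \forall y \near (de : R^o), Delta1 Q d k y.
Proof.
have barQ_row i j : i != d -> (- (k *: barQ Q d)) i j = 0.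
  by move=> /negbTE ne; rewrite !mxE ne mulr0 oppr0.
move=> /(hurwitz_row_perturbation barQ_row) near0; apply/nbhs0P.
apply: filterS near0 => e; rewrite /Delta1 /calQd.
suff -> : - (k *: (calQ Q + (de + e) *: barQ Q d)) =
  - (k *: (calQ Q + de *: barQ Q d)) + e *: - (k *: barQ Q d) by [].
by apply/matrixP => i j; rewrite !mxE; ring.
Qed.

Lemma Delta1_0 : Delta1 Q d k 0.
Proof. by rewrite /Delta1 calQd0. Qed.

Lemma xdelta_Delta1 de : Delta1 Q d k de -> q3 Q d + de * q2 Q d != 0 ->
  xdelta Q b d de = xstar Q b + tau de *: Phi Q d.
Proof.
move=> Dde; apply: xdelta_line; last exact: Delta1_unitmx.
by rewrite -calQd0; apply: Delta1_unitmx; exact: Delta1_0.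
Qed.

Hypothesis Q_sym : forall i, (Q i)^T = Q i.
Variable p : 'I_n.+1 -> R.

Lemma cost_xdelta i de : Delta1 Q d k de -> q3 Q d + de * q2 Q d != 0 ->
  cost (Q i) (b i) (p i) (xdelta Q b d de) =
  cost (Q i) (b i) (p i) (xstar Q b) + tau de * r1 Q b d i + tau de ^+ 2 * r2 Q d i.
Proof. by move=> Dde den_neq0; rewrite xdelta_Delta1 // cost_line. Qed.

Lemma derive1_J1delta de : Delta1 Q d k de -> q3 Q d + de * q2 Q d != 0 ->
  derive1 (J1delta Q b p d) de = (r1 Q b d ord0 + 2 * r2 Q d ord0 * tau de) *
    (q1 Q b d * q3 Q d / (q3 Q d + de * q2 Q d) ^+ 2).
Proof.
move=> Dde den_neq0.
have J1_near : \forall y \near (de : R^o), J1delta Q b p d y =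
    cost (Q ord0) (b ord0) (p ord0) (xstar Q b) + tau y * r1 Q b d ord0
      + tau y ^+ 2 * r2 Q d ord0.
  apply: filterS (filterI (Delta1_nbhs Dde) (mobius_den_nbhs den_neq0)) => y [Dy deny].
  exact: cost_xdelta.
rewrite derive1E (near_eq_derive (1 : R^o) J1_near).
have tau' := is_derive_mobius (q1 Q b d) den_neq0.
by apply: derive_val; apply: is_derive_eq; rewrite /GRing.scale /=; ring.
Qed.

Lemma deception_nbhs0 (S : {set 'I_n.+1}) :
  q3 Q d != 0 -> (forall i, i \in S -> r1 Q b d i != 0) ->
  \forall de \near (0 : R^o), [/\ Delta1 Q d k de, 0 < q3 Q d * (q3 Q d + de * q2 Q d)
    & forall i, i \in S -> `|2 * r2 Q d i * tau de| < `|r1 Q b d i|].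
Proof.
move=> q3_neq0 r1_neq0.
have tau_small i : \forall de \near (0 : R^o),
    i \in S -> `|2 * r2 Q d i * tau de| < `|r1 Q b d i|.
  have [iS|iS] := boolP (i \in S); last by near=> de => iS'; case/negP: iS.
  have r1_gt0 : 0 < `|r1 Q b d i| by rewrite normr_gt0 r1_neq0.
  have tau_eq de : 2 * r2 Q d i * tau de = mobius (2 * r2 Q d i * q1 Q b d) (q2 Q d) (q3 Q d) de.
    by rewrite /mobius; ring.
  have /cvgr0_norm_lt /(_ _ r1_gt0) :=
    mobius_cvg0 (2 * r2 Q d i * q1 Q b d) (q2 Q d) q3_neq0.
  by apply: filterS => de; rewrite tau_eq.
have den_small : \forall de \near (0 : R^o), `|de * q2 Q d| < `|q3 Q d|.
  have radius_gt0 : 0 < `|q3 Q d| / (`|q2 Q d| + 1).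
    by rewrite divr_gt0 ?normr_gt0 // ltr_pwDr ?normr_ge0.
  apply: filterS (nbhs0_lt radius_gt0) => de /=; rewrite ltr_pdivlMr ?ltr_pwDr //.
  by rewrite normrM; have := normr_ge0 de; have := normr_ge0 (q2 Q d); nra.
near=> de; split.
- by near: de; exact: Delta1_nbhs Delta1_0.
- by apply: mul_addr_small_gt0; near: de; exact: den_small.
- by near: de; exact: filter_forall tau_small.
Unshelve. all: by end_near.
Qed.

Lemma derive1_J1delta_sign eps1 de : Delta1 Q d k de -> q3 Q d + de * q2 Q d != 0 ->
  eps1 * r1 Q b d ord0 * q1 Q b d * q3 Q d < 0 ->
  `|2 * r2 Q d ord0 * tau de| < `|r1 Q b d ord0| ->
  eps1 * derive1 (J1delta Q b p d) de < 0.
Proof.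
move=> Dde den_neq0 deceiver_sign tau_small.
rewrite derive1_J1delta //; set A := _ + _ * tau de; set D := _ ^+ 2.
have A_pos : 0 < r1 Q b d ord0 * A by apply: mul_addr_small_gt0.
have A_neq0 : A != 0 by apply: contraTneq A_pos => ->; rewrite mulr0 ltxx.
have D_gt0 : 0 < D by rewrite exprn_even_gt0.
rewrite -(pmulr_llt0 _ (mulr_gt0 D_gt0 A_pos)).
have -> : eps1 * (A * (q1 Q b d * q3 Q d / D)) * (D * (r1 Q b d ord0 * A)) =
    eps1 * r1 Q b d ord0 * q1 Q b d * q3 Q d * A ^+ 2.
  by field; rewrite gt_eqF.
by rewrite nmulr_rlt0 // exprn_even_gt0.
Qed.

Lemma cost_xdelta_lt i de : Delta1 Q d k de -> q3 Q d + de * q2 Q d != 0 ->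
  tau de * r1 Q b d i < 0 -> `|2 * r2 Q d i * tau de| < `|r1 Q b d i| ->
  cost (Q i) (b i) (p i) (xdelta Q b d de) < cost (Q i) (b i) (p i) (xstar Q b).
Proof.
move=> Dde den_neq0 tau_r1 tau_small.
rewrite cost_xdelta // -addrA gtrDl; apply: quadratic_lt0 => //.
apply: le_lt_trans tau_small.
by rewrite -mulrA [`|2 * _|]normrM ger0_norm // ler_peMl // ler1n.
Qed.

Lemma exists_profitable_deception eps1 (S : {set 'I_n.+1}) : ord0 \in S ->
  (forall i, i \in S -> r1 Q b d i != 0 /\ Num.sg (r1 Q b d i) = Num.sg (r1 Q b d ord0)) ->
  eps1 * r1 Q b d ord0 * q1 Q b d * q3 Q d < 0 ->
  exists de, [/\ Delta1 Q d k de, eps1 * derive1 (J1delta Q b p d) de < 0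
    & forall i, i \in S ->
        cost (Q i) (b i) (p i) (xdelta Q b d de) < cost (Q i) (b i) (p i) (xstar Q b)].
Proof.
move=> S0 S_sign deceiver_sign.
move: (ltr0_neq0 deceiver_sign).
rewrite !mulf_eq0 !negb_or => /andP[/andP[/andP[_ r10] q10] q30].
have S_r1 i : i \in S -> r1 Q b d i != 0 by move=> /S_sign [].
have [de [[Dde den_gt0 tau_small] de_sign]] :=
  near0_exists_sign (mulf_neq0 (mulf_neq0 r10 q10) q30) (deception_nbhs0 S q30 S_r1).
have den_neq0 : q3 Q d + de * q2 Q d != 0.
  by apply: contraTneq den_gt0 => ->; rewrite mulr0 ltxx.
have tau_r10 : tau de * r1 Q b d ord0 < 0.
  by apply: mobius_mulr_lt0; rewrite // !mulrA.
exists de; split; [by [] | exact: derive1_J1delta_sign (tau_small _ S0) |].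
move=> i iS; apply: cost_xdelta_lt; rewrite ?tau_small //.
by rewrite (sgr_eq_mulr_lt0 _ _ _ (S_sign i iS).2).
Qed.

End DeceptiveEquilibrium.

Theorem theorem3 (R : realType) (n : nat)
  (Q : 'I_n.+1 -> 'M[R]_n.+1) (b : 'I_n.+1 -> 'cV[R]_n.+1) (p : 'I_n.+1 -> R)
  (d : 'I_n.+1) (k eps1 : R) (M : {set 'I_n.+1})
  (hQsym : forall i, (Q i)^T = Q i)
  (hd : d != ord0)
  (hk : 0 < k)
  (hHur : hurwitz (- (k *: calQ Q)))
  (hinv : Qd1 Q d \in unitmx)
  (heps : eps1 != 0)
  (hM : forall i, i \in M ->
          r1 Q b d i != 0 /\ Num.sg (r1 Q b d i) = Num.sg (r1 Q b d ord0))
  (hsign : eps1 * r1 Q b d ord0 * q1 Q b d * q3 Q d < 0) :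
  (exists Jref, attainable Q b p d k eps1 Jref) /\
  exists Omegastar : R -> Prop,
    (forall Jref, Omegastar Jref -> attainable Q b p d k eps1 Jref) /\
    (exists Jref, Omegastar Jref) /\
    forall Jref, Omegastar Jref ->
      exists deltas : R,
        Delta1 Q d k deltas /\
        J1delta Q b p d deltas = Jref /\
        eps1 * derive1 (J1delta Q b p d) deltas < 0 /\
        forall i, i \in M :|: [set ord0] ->
          cost (Q i) (b i) (p i) (xdelta Q b d deltas) <
          cost (Q i) (b i) (p i) (xstar Q b).
Proof.
have r10 : r1 Q b d ord0 != 0.
  by apply: contraTneq hsign => ->; rewrite mulr0 !mul0r ltxx.
have S_sign i : i \in M :|: [set ord0] ->
    r1 Q b d i != 0 /\ Num.sg (r1 Q b d i) = Num.sg (r1 Q b d ord0).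
  by rewrite !inE => /orP[/hM // | /eqP ->].
have deceiver_in : ord0 \in M :|: [set ord0] by rewrite !inE eqxx orbT.
have [de [Dde deriv_neg cost_lt]] := @exists_profitable_deception R n Q b d hinv k
  (lt0r_neq0 hk) hHur hQsym p eps1 _ deceiver_in S_sign hsign.
split; first by exists (J1delta Q b p d de), de.
exists (fun J => J = J1delta Q b p d de); split; first by move=> _ ->; exists de.
by split; [exists (J1delta Q b p d de) | move=> _ ->; exists de].
Qed.
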